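(* Let $\mathbf K$ be a commutative field, $p,q\in\mathbb N$, and let $\mathcal A\subset\mathbf K^{\mathcal M_{p\times q}}$ be a recursively closed vector space with finite saturation level $N$. Then $\mathcal A$ and $\mathcal A[\mathcal M_{p\times q}^{\le N}]$ are isomorphic. In particular $\mathcal A$ is finite-dimensional and contained in $\mathrm{Rec}_{p\times q}(\mathbf K)$.
   Context: For $p,q,l\in\mathbb N$, $\mathcal M_{p\times q}^l$ is the set of pairs $(U,W)$ of words of common length $l$ with $U\in\{0,\dots,p-1\}^l$, $W\in\{0,\dots,q-1\}^l$; $\mathcal M_{p\times q}=\bigcup_l\mathcal M_{p\times q}^l$ (a monoid under concatenation) and $\mathcal M_{p\times q}^{\le l}$ is the set of words of length at most $l$. $\mathbf K^{\mathcal M_{p\times q}}$ is the space of functions $\mathcal M_{p\times q}\to\mathbf K$, values written $A[U,W]$. Shift maps: $(\rho(S,T)A)[U,W]=A[US,WT]$. A subspace is recursively closed if it is invariant under all shift maps. For a subspace $\mathcal A$, $\mathcal A[\mathcal M_{p\times q}^{\le l}]$ denotes the image of $\mathcal A$ under restriction of functions to $\mathcal M_{p\times q}^{\le l}$. The saturation level of a non-zero subspace $\mathcal A$ is the smallest integer $N\ge0$ (if any) such that the natural projection $\mathcal A[\mathcal M_{p\times q}^{\le N+1}]\to\mathcal A[\mathcal M_{p\times q}^{\le N}]$ is an isomorphism; it is $\infty$ if no such $N$ exists, and the zero space has saturation level $-1$. $\mathrm{Rec}_{p\times q}(\mathbf K)$ is the set of $A$ whose linear span of $\{\rho(S,T)A\}$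 is finite-dimensional. *)

From HB Require Import structures.
From mathcomp Require Import all_boot all_order all_algebra.
Set Implicit Arguments. Unset Strict Implicit. Unset Printing Implicit Defensive.
Import GRing.Theory.
Local Open Scope ring_scope.

Definition Mpq (p q : nat) := {w : seq 'I_p * seq 'I_q | size w.1 == size w.2}.

Definition mlen p q (w : Mpq p q) : nat := size (sval w).1.

Lemma mcat_proof p q (w1 w2 : Mpq p q) :
  size ((sval w1).1 ++ (sval w2).1) == size ((sval w1).2 ++ (sval w2).2).
Proof.
case: w1 w2 => [[u1 v1] /= /eqP h1] [[u2 v2] /= /eqP h2].
by rewrite !size_cat h1 h2.
Qed.

Definition mcat p q (w1 w2 : Mpq p q) : Mpq p q :=
  exist _ ((sval w1).1 ++ (sval w2).1, (sval w1).2 ++ (sval w2).2) (mcat_proof w1 w2).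

Definition rho (K : fieldType) p q (st : Mpq p q) (A : Mpq p q -> K) : Mpq p q -> K :=
  fun uw => A (mcat uw st).

Definition is_subspace (K : fieldType) p q (A : (Mpq p q -> K) -> Prop) : Prop :=
  [/\ A (fun _ => 0),
      (forall f g, A f -> A g -> A (fun x => f x + g x)) &
      (forall (c : K) f, A f -> A (fun x => c * f x))].

Definition recursively_closed (K : fieldType) p q (A : (Mpq p q -> K) -> Prop) : Prop :=
  forall st f, A f -> A (rho st f).

Definition lin_comb (K : fieldType) p q (s : seq (Mpq p q -> K))
  (c : 'I_(size s) -> K) : Mpq p q -> K :=
  fun x => \sum_(i < size s) c i * nth (fun _ => 0) s i x.
Arguments lin_comb {K p q} s c _.

Definition spanned_by (K : fieldType) p q (s : seq (Mpq p q -> K))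
  (P : (Mpq p q -> K) -> Prop) : Prop :=
  forall f, P f -> exists c, f = lin_comb s c.

Definition finite_dim (K : fieldType) p q (A : (Mpq p q -> K) -> Prop) : Prop :=
  exists s : seq (Mpq p q -> K), (forall i : 'I_(size s), A (nth (fun _ => 0) s i)) /\ spanned_by s A.

(* Rec_{p x q}(K): the linear span of {rho(S,T) f} is finite-dimensional,
   i.e. contained in the span of a finite family. *)
Definition Rec (K : fieldType) p q (f : Mpq p q -> K) : Prop :=
  exists s : seq (Mpq p q -> K), spanned_by s (fun g => exists st, g = rho st f).

Definition agree_upto (K : fieldType) p q (l : nat) (f g : Mpq p q -> K) : Prop :=
  forall w, (mlen w <= l)%N -> f w = g w.

(* The natural projection A[M^{<= l+1}] -> A[M^{<= l}] is an isomorphism.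
   It is always surjective; injectivity means: two elements of A agreeing
   on M^{<= l} agree on M^{<= l+1}. *)
Definition proj_iso (K : fieldType) p q (A : (Mpq p q -> K) -> Prop) (l : nat) : Prop :=
  (forall f g, A f -> A g -> agree_upto l f g -> agree_upto l.+1 f g) /\
  (forall f, A f -> exists g, A g /\ agree_upto l g f).

Definition saturation_level (K : fieldType) p q (A : (Mpq p q -> K) -> Prop) (N : nat) : Prop :=
  [/\ exists f, A f /\ exists w, f w != 0,
      proj_iso A N &
      forall l, (l < N)%N -> ~ proj_iso A l].

From mathcomp Require Import all_boot all_order all_algebra.
From Stdlib Require Import Classical FunctionalExtensionality.
Set Implicit Arguments. Unset Strict Implicit. Unset Printing Implicit Defensive.
Import GRing.Theory.
Local Open Scope ring_scope.

(* If [h] in [A] vanishes on words of length at most [N], saturation makes it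
   vanish on words of length at most [N + 1], so each shift [rho a h] by a
   single letter [a] again vanishes up to length [N]; induction on the length
   of words gives [h = 0].  Thus restriction to the finite set of words of
   length at most [N] is injective on [A], so [A] embeds into a
   finite-dimensional space, and since [A] is closed under shifts, the shifts
   of each of its elements stay in a finite-dimensional space. *)

Section Words.
Variables p q : nat.
Implicit Types (w : Mpq p q) (k : nat).

Lemma mlen_mcat w1 w2 : mlen (mcat w1 w2) = (mlen w1 + mlen w2)%N.
Proof. by rewrite /mlen /= size_cat. Qed.

Lemma mtake_proof k w : size (take k (sval w).1) == size (take k (sval w).2).
Proof. by case: w => [[u v] /= /eqP h]; rewrite !size_take h. Qed.

Lemma mdrop_proof k w : size (drop k (sval w).1) == size (drop k (sval w).2).
Proof. by case: w => [[u v] /= /eqP h]; rewrite !size_drop h. Qed.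

Definition mtake k w : Mpq p q :=
  exist _ (take k (sval w).1, take k (sval w).2) (mtake_proof k w).

Definition mdrop k w : Mpq p q :=
  exist _ (drop k (sval w).1, drop k (sval w).2) (mdrop_proof k w).

Lemma mcat_take_drop k w : mcat (mtake k w) (mdrop k w) = w.
Proof.
case: w => [[u v] h]; rewrite /mcat /=.
move: (mcat_proof _ _); rewrite !cat_take_drop => h'.
by rewrite (bool_irrelevance h' h).
Qed.

Lemma mlen_mtake k w : mlen (mtake k w) = minn k (mlen w).
Proof. by rewrite /mlen /= size_take_min. Qed.

Lemma mlen_mdrop k w : mlen (mdrop k w) = (mlen w - k)%N.
Proof. by rewrite /mlen /= size_drop. Qed.

End Words.

Lemma exists_seqs_upto (T : finType) n :
  exists ss : seq (seq T), forall s, (size s <= n)%N -> s \in ss.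
Proof.
elim: n => [|n [ss Hss]]; first by exists [:: [::]] => -[].
exists ([::] :: [seq x :: s | x <- enum T, s <- ss]) => -[|x s] //= hs.
by rewrite in_cons /=; apply: allpairs_f; [rewrite mem_enum | exact: Hss].
Qed.

Lemma exists_words_upto p q N :
  exists ws : seq (Mpq p q), forall w, (mlen w <= N)%N -> w \in ws.
Proof.
have [us Hus] := exists_seqs_upto 'I_p N.
have [vs Hvs] := exists_seqs_upto 'I_q N.
exists (pmap insub [seq (u, v) | u <- us, v <- vs]) => -[[u v] h] lw.
rewrite mem_pmap_sub /=; apply: allpairs_f; first exact: Hus.
by apply: Hvs; rewrite -(eqP h).
Qed.

Section RowSpan.
Variables (K : fieldType) (n : nat) (T : Type) (x0 : T) (phi : T -> 'rV[K]_n).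

Definition span_mx (s : seq T) : 'M[K]_(size s, n) :=
  \matrix_(i < size s) phi (nth x0 s i).

Lemma span_mx_head x s : (phi x <= span_mx (x :: s))%MS.
Proof. by have := row_sub (ord0 : 'I_(size (x :: s))) (span_mx (x :: s)); rewrite rowK. Qed.

Lemma span_mx_behead x s : (span_mx s <= span_mx (x :: s))%MS.
Proof.
apply/row_subP => i; rewrite rowK.
by have := row_sub (lift ord0 i) (span_mx (x :: s)); rewrite rowK lift0.
Qed.

Lemma exists_span_mx (P : T -> Prop) :
  exists s, (forall i : 'I_(size s), P (nth x0 s i)) /\
            forall x, P x -> (phi x <= span_mx s)%MS.
Proof.
pose spans s := forall x, P x -> (phi x <= span_mx s)%MS.
(* Adjoining an element outside the row space raises the rank, which is at most [n]. *)
have grow k : exists s, (forall i : 'I_(size s), P (nth x0 s i)) /\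
                        (spans s \/ (k <= \rank (span_mx s))%N).
  elim: k => [|k [s [Ps [spans_s | rk]]]].
  - by exists [::]; split=> [[]|] //; right.
  - by exists s; split; [|left].
  - case: (classic (exists x, P x /\ ~~ (phi x <= span_mx s)%MS)) => [[x [Px xs]] | none].
      exists (x :: s); split=> [[[|i] hi] //=|]; first exact: (Ps (@Ordinal _ i hi)).
      right; apply: leq_ltn_trans rk (rank_ltmx _).
      rewrite ltmxE span_mx_behead; apply: contra xs; exact: submx_trans (span_mx_head x s).
    exists s; split=> //; left=> x Px.
    by case: (boolP (phi x <= span_mx s)%MS) => // xs; case: none; exists x.
have [s [Ps [spans_s | rk]]] := grow n.+1; first by exists s.
by have := leq_trans rk (rank_leq_col _); rewrite ltnn.
Qed.

End RowSpan.

Section Subspace.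
Variables (K : fieldType) (p q : nat) (A : (Mpq p q -> K) -> Prop).
Hypothesis subA : is_subspace A.

Lemma subspace_sub f g : A f -> A g -> A (fun x => f x - g x).
Proof.
case: subA => _ AD AZ Af Ag.
have -> : (fun x => f x - g x) = (fun x => f x + (-1) * g x).
  by apply: functional_extensionality => x; rewrite mulN1r.
by apply: AD => //; apply: AZ.
Qed.

Lemma subspace_sum (I : Type) (r : seq I) (F : I -> Mpq p q -> K) :
  (forall i, A (F i)) -> A (fun x => \sum_(i <- r) F i x).
Proof.
case: subA => A0 AD _ AF; elim: r => [|a r IH].
  have -> : (fun x => \sum_(i <- [::]) F i x) = (fun _ => 0).
    by apply: functional_extensionality => x; rewrite big_nil.
  exact: A0.
have -> : (fun x => \sum_(i <- a :: r) F i x) = (fun x => F a x + \sum_(i <- r) F i x).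
  by apply: functional_extensionality => x; rewrite big_cons.
exact: AD.
Qed.

Lemma lin_comb_in s c :
  (forall i : 'I_(size s), A (nth (fun _ => 0) s i)) -> A (lin_comb s c).
Proof.
case: subA => _ _ AZ As; rewrite /lin_comb.
by apply: (@subspace_sum _ _ (fun i x => c i * nth (fun _ => 0) s i x)) => i; apply: AZ.
Qed.

Definition restr_row (ws : seq (Mpq p q)) (f : Mpq p q -> K) : 'rV[K]_(size ws) :=
  \row_j f (tnth (in_tuple ws) j).

Lemma restr_row_lin_comb ws s (c : 'rV_(size s)) :
  restr_row ws (lin_comb s (fun i => c 0 i)) =
  c *m span_mx (fun _ => 0) (restr_row ws) s.
Proof. by apply/rowP => j; rewrite !mxE; apply: eq_bigr => i _; rewrite !mxE. Qed.

Lemma restr_row_eq ws f g : restr_row ws f = restr_row ws g -> {in ws, f =1 g}.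
Proof.
move=> fg w /(tnthP (in_tuple ws)) [j ->].
by have := congr1 (fun r : 'rV_(size ws) => r 0 j) fg; rewrite !mxE.
Qed.

Lemma finite_dim_of_restr_inj (ws : seq (Mpq p q)) :
  (forall f g, A f -> A g -> {in ws, f =1 g} -> f = g) -> finite_dim A.
Proof.
move=> inj; have [s [As span]] := exists_span_mx (fun _ => 0) (restr_row ws) A.
exists s; split=> // f Af; have /submxP [c fc] := span f Af.
exists (fun i => c 0 i); apply: inj => //; first exact: lin_comb_in.
by apply: restr_row_eq; rewrite restr_row_lin_comb.
Qed.

Hypothesis recA : recursively_closed A.

Lemma Rec_of_finite_dim : finite_dim A -> forall f, A f -> Rec f.
Proof. by move=> [s [_ span]] f Af; exists s => _ [st ->]; apply/span/recA. Qed.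

Variable N : nat.
Hypothesis satA : proj_iso A N.

Lemma eq0_of_agree_upto0 h : A h -> agree_upto N h (fun _ => 0) -> h = (fun _ => 0).
Proof.
have [A0 _ _] := subA; have [ext _] := satA.
suff vanish k h' : A h' -> agree_upto N h' (fun _ => 0) ->
                   forall w, mlen w = k -> h' w = 0.
  by move=> Ah h0; apply: functional_extensionality => w; exact: vanish.
elim: k h' => [|k IH] h' Ah h0 w lw; first by apply: h0; rewrite lw.
have h0S := ext _ _ Ah A0 h0.
rewrite -(mcat_take_drop k w).
apply: (IH (rho (mdrop k w) h')); first exact: recA.
  by move=> y ly; apply: h0S; rewrite mlen_mcat mlen_mdrop lw subSnn addn1.
by rewrite mlen_mtake lw; apply/minn_idPl.
Qed.

Lemma agree_upto_eq f g : A f -> A g -> agree_upto N f g -> f = g.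
Proof.
move=> Af Ag fg; apply: functional_extensionality => w; apply/eqP; rewrite -subr_eq0.
have fg0 : agree_upto N (fun x => f x - g x) (fun _ => 0).
  by move=> y /fg ->; rewrite subrr.
by rewrite (congr1 (fun h => h w) (eq0_of_agree_upto0 (subspace_sub Af Ag) fg0)).
Qed.

End Subspace.

Theorem mainTheorem4 (K : fieldType) (p q : nat) (A : (Mpq p q -> K) -> Prop) (N : nat) :
  is_subspace A -> recursively_closed A -> saturation_level A N ->
  (* the natural restriction A -> A[M^{<= N}] is an isomorphism:
     injective ... *)
  ((forall f g, A f -> A g -> agree_upto N f g -> f = g) /\
  (* ... (and surjective by definition of the image) *)
   (forall f, A f -> exists g, A g /\ agree_upto N g f)) /\
  finite_dim A /\
  (forall f, A f -> Rec f).
Proof.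
move=> subA recA [_ satA _].
have inj := agree_upto_eq subA recA satA.
have [ws cover] := exists_words_upto p q N.
have fdA : finite_dim A.
  apply: (finite_dim_of_restr_inj subA (ws := ws)) => f g Af Ag fg.
  by apply: inj => // w /cover; apply: fg.
split; first by split; [|case: satA].
by split; [|exact: Rec_of_finite_dim].
Qed.
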